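(* For any cluster decomposition $\mathbf z=\sum\mathbf z_i$ and any $i\neq j$, $\mathrm{sep}(\mathbf z_i,\mathbf z_j)>2(r_{|\mathbf z_i|}+r_{|\mathbf z_j|})$.
   Context: $M$ is a smooth Riemannian manifold with distance $\mathrm{dist}$, with $r_{conv}>0$ the infimum of the convexity radius. Configurations lie in $\mathrm{Sym}^n(M)$ (unordered tuples with multiplicity), $|\mathbf z|$ is the number of points, $+$ is union with multiplicity, and $\mathrm{sep}(\mathbf z_1,\mathbf z_2)=\min_{z\in\mathbf z_1,w\in\mathbf z_2}\mathrm{dist}(z,w)$. $\mathbf z$ is pre-confined if $\mathrm{dist}(z_i,z_j)<r_{conv}$ for all $i,j$; then $c(\mathbf z)$ is the unique minimizer of $\sum_i\mathrm{dist}(z_i,z)^2$ on $\bigcap_iB_\rho(z_i)$ for $\max\mathrm{dist}(z_i,z_j)<\rho<r_{conv}$, and $r(\mathbf z)=\max_i\mathrm{dist}(z_i,c(\mathbf z))$. A fixed clustering rule is $0<r_1<\dots<r_N\ll r_{conv}$, $0=d_1<\dots<d_N\ll r_{conv}$ with $r_k>d_k+r_{k-1}$, $d_k>6r_{k-1}$. $\mathbf z$ is confined if pre-confined and $r(\mathbf z)<r_{|\mathbf z|}$; $\mathbf z_1,\mathbf z_2$ are separated if pre-confined with $\mathrm{dist}(c(\mathbf z_1),c(\mathbf z_2))>d_{|\mathbf z_1|+|\mathbf z_2|}$; a cluster decomposition $\mathbf z=\sum\mathbf z_i$ has all parts confined and every pair of distinct parts separated. *)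

(* The manifold M is abstracted to a metric space (T, dist). *)
From Stdlib Require Import Reals List Permutation Classical ClassicalEpsilon.
Open Scope R_scope.

Section Defs.
Context {T : Type} (dist : T -> T -> R) (rconv : R).

Record is_metric : Prop := {
  dist_nonneg : forall x y, 0 <= dist x y;
  dist_refl : forall x, dist x x = 0;
  dist_sep : forall x y, dist x y = 0 -> x = y;
  dist_sym : forall x y, dist x y = dist y x;
  dist_tri : forall x y w, dist x w <= dist x y + dist y w }.

(* configurations in Sym^n(M): lists up to permutation; |z| = length z *)
Definition pre_confined (z : list T) : Prop :=
  forall a b, In a z -> In b z -> dist a b < rconv.

Definition Fsum (z : list T) (x : T) : R :=
  fold_right Rplus 0 (map (fun a => (dist a x) ^ 2) z).

Definition in_balls (rho : R) (z : list T) (x : T) : Prop :=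
  forall a, In a z -> dist a x < rho.

Definition is_center (z : list T) (x : T) : Prop :=
  exists rho,
    (forall a b, In a z -> In b z -> dist a b < rho) /\ rho < rconv /\
    in_balls rho z x /\
    (forall y, in_balls rho z y -> Fsum z x <= Fsum z y) /\
    (forall y, in_balls rho z y ->
       (forall w, in_balls rho z w -> Fsum z y <= Fsum z w) -> y = x).

(* c(z): the center when it exists (default x0 otherwise) *)
Definition center (x0 : T) (z : list T) : T :=
  match excluded_middle_informative (exists x, is_center z x) with
  | left H => proj1_sig (constructive_indefinite_description _ H)
  | right _ => x0
  end.

Definition c (z : list T) : option T :=
  match z with nil => None | a :: _ => Some (center a z) end.

Definition radius (z : list T) : R :=
  match c z with
  | None => 0
  | Some x => fold_right Rmax 0 (map (fun a => dist a x) z)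
  end.

Definition sep (z1 z2 : list T) : R :=
  match list_prod z1 z2 with
  | nil => 0
  | p :: ps => fold_right Rmin (dist (fst p) (snd p))
                 (map (fun q => dist (fst q) (snd q)) ps)
  end.

(* fixed clustering rule r_1<...<r_N, 0=d_1<...<d_N (indices 1..N) *)
Definition clustering_rule (N : nat) (rr dd : nat -> R) : Prop :=
  (1 <= N)%nat /\ 0 < rr 1%nat /\ dd 1%nat = 0 /\
  (forall k, (1 <= k < N)%nat -> rr k < rr (S k) /\ dd k < dd (S k)) /\
  rr N < rconv /\ dd N < rconv /\
  (forall k, (2 <= k <= N)%nat ->
     rr k > dd k + rr (k - 1)%nat /\ dd k > 6 * rr (k - 1)%nat).

Definition confined (N : nat) (rr : nat -> R) (z : list T) : Prop :=
  pre_confined z /\ (1 <= length z <= N)%nat /\ radius z < rr (length z).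

Definition separated (N : nat) (dd : nat -> R) (z1 z2 : list T) : Prop :=
  pre_confined z1 /\ pre_confined z2 /\
  (length z1 + length z2 <= N)%nat /\
  match c z1, c z2 with
  | Some x1, Some x2 => dist x1 x2 > dd (length z1 + length z2)%nat
  | _, _ => False
  end.

(* z = sum_i z_i (union with multiplicity) *)
Definition cluster_decomposition (N : nat) (rr dd : nat -> R)
    (z : list T) (parts : list (list T)) : Prop :=
  Permutation (concat parts) z /\
  (forall i, (i < length parts)%nat -> confined N rr (nth i parts nil)) /\
  (forall i j, i <> j -> (i < length parts)%nat -> (j < length parts)%nat ->
     separated N dd (nth i parts nil) (nth j parts nil)).

End Defs.

(** The centers of two separated clusters are more than [d_(a+b) > 6 r_(a+b-1)]
    apart, where [a] and [b] are the sizes of the clusters, and the rule's radii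
    increase, so [6 r_(a+b-1) >= 3 (r_a + r_b)].  Every point of a confined cluster
    lies within [r_a] (resp. [r_b]) of its center, so by the triangle inequality
    any two points of the two clusters are more than [2 (r_a + r_b)] apart. *)

From Pilot Require Import Defs.
From Stdlib Require Import Reals List Lra Lia.
Open Scope R_scope.

Lemma fold_right_Rmax_ge (l : list R) (m x : R) :
  In x l -> x <= fold_right Rmax m l.
Proof.
  induction l as [|y l IH]; simpl; [tauto|].
  intros [<- | Hx]; [apply Rmax_l|].
  eapply Rle_trans; [apply IH, Hx | apply Rmax_r].
Qed.

Lemma fold_right_Rmin_gt (l : list R) (m x : R) :
  x > m -> (forall y, In y l -> y > m) -> fold_right Rmin x l > m.
Proof.
  induction l as [|y l IH]; simpl; intros Hx Hl; [lra|].
  unfold Rmin; destruct (Rle_dec _ _); auto.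
Qed.

Lemma incr_le (N : nat) (f : nat -> R) :
  (forall k, (1 <= k < N)%nat -> f k < f (S k)) ->
  forall m n, (1 <= m <= n)%nat -> (n <= N)%nat -> f m <= f n.
Proof.
  intros Hincr m n [Hm Hmn]; induction Hmn as [|n Hmn IH]; intros Hn; [lra|].
  eapply Rle_trans; [apply IH; lia|].
  left; apply Hincr; lia.
Qed.

Section Clusters.

Variables (T : Type) (dist : T -> T -> R) (rconv : R).
Hypothesis dist_metric : is_metric dist.

Lemma dist_le_radius (z : list T) (x a : T) :
  c dist rconv z = Some x -> In a z -> dist a x <= radius dist rconv z.
Proof.
  intros Hc Ha; unfold radius; rewrite Hc.
  apply fold_right_Rmax_ge, in_map_iff; eauto.
Qed.

Lemma sep_gt (z1 z2 : list T) (m : R) :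
  z1 <> nil -> z2 <> nil ->
  (forall p q, In p z1 -> In q z2 -> dist p q > m) -> sep dist z1 z2 > m.
Proof.
  intros Hz1 Hz2 Hpq.
  assert (Hprod : forall pq, In pq (list_prod z1 z2) -> dist (fst pq) (snd pq) > m).
  { intros [p q] Hpq'; apply in_prod_iff in Hpq' as [Hp Hq]; auto. }
  unfold sep; destruct (list_prod z1 z2) as [|pq pqs] eqn:Hl.
  - destruct z1 as [|p z1]; [congruence|]; destruct z2 as [|q z2]; [congruence|].
    discriminate Hl.
  - apply fold_right_Rmin_gt; [apply Hprod; left; reflexivity|].
    intros y Hy; apply in_map_iff in Hy as [pq' [<- Hpq']].
    apply Hprod; right; exact Hpq'.
Qed.

Lemma sep_gt_of_centers (z1 z2 : list T) (x1 x2 : T) (m : R) :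
  c dist rconv z1 = Some x1 -> c dist rconv z2 = Some x2 ->
  dist x1 x2 - radius dist rconv z1 - radius dist rconv z2 > m ->
  sep dist z1 z2 > m.
Proof.
  intros Hc1 Hc2 Hm.
  apply sep_gt; [destruct z1; discriminate | destruct z2; discriminate |].
  intros p q Hp Hq.
  pose proof (dist_le_radius _ _ _ Hc1 Hp) as Hp1.
  pose proof (dist_le_radius _ _ _ Hc2 Hq) as Hq2.
  pose proof (Defs.dist_tri dist dist_metric x1 p x2).
  pose proof (Defs.dist_tri dist dist_metric p q x2).
  pose proof (Defs.dist_sym dist dist_metric x1 p).
  lra.
Qed.

Lemma clustering_rule_rr_le (N : nat) (rr dd : nat -> R) (m n : nat) :
  clustering_rule rconv N rr dd -> (1 <= m <= n)%nat -> (n <= N)%nat ->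
  rr m <= rr n.
Proof.
  intros (_ & _ & _ & Hincr & _); apply incr_le.
  intros k Hk; apply Hincr, Hk.
Qed.

Lemma clustering_rule_dd_gt (N : nat) (rr dd : nat -> R) (a b : nat) :
  clustering_rule rconv N rr dd -> (1 <= a)%nat -> (1 <= b)%nat ->
  (a + b <= N)%nat -> dd (a + b)%nat > 3 * (rr a + rr b).
Proof.
  intros Hrule Ha Hb Hab.
  assert (Hra : rr a <= rr (a + b - 1)%nat)
    by (apply (clustering_rule_rr_le N rr dd); auto; lia).
  assert (Hrb : rr b <= rr (a + b - 1)%nat)
    by (apply (clustering_rule_rr_le N rr dd); auto; lia).
  destruct Hrule as (_ & _ & _ & _ & _ & _ & Hgap).
  destruct (Hgap (a + b)%nat) as [_ Hd]; [lia|].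
  lra.
Qed.

Lemma confined_separated_sep_gt (N : nat) (rr dd : nat -> R) (z1 z2 : list T) :
  clustering_rule rconv N rr dd ->
  confined dist rconv N rr z1 -> confined dist rconv N rr z2 ->
  separated dist rconv N dd z1 z2 ->
  sep dist z1 z2 > 2 * (rr (length z1) + rr (length z2)).
Proof.
  intros Hrule (_ & Hlen1 & Hr1) (_ & Hlen2 & Hr2) (_ & _ & Hlen & Hcenters).
  pose proof (clustering_rule_dd_gt N rr dd (length z1) (length z2) Hrule
                ltac:(lia) ltac:(lia) Hlen) as Hd.
  destruct (c dist rconv z1) as [x1|] eqn:Hc1; [|contradiction].
  destruct (c dist rconv z2) as [x2|] eqn:Hc2; [|contradiction].
  apply (sep_gt_of_centers _ _ x1 x2); auto.
  lra.
Qed.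

End Clusters.

Theorem lemma2p10 (T : Type) (dist : T -> T -> R) (rconv : R)
    (N : nat) (rr dd : nat -> R) (z : list T) (parts : list (list T)) :
  is_metric dist -> 0 < rconv ->
  clustering_rule rconv N rr dd ->
  cluster_decomposition dist rconv N rr dd z parts ->
  forall i j, i <> j -> (i < length parts)%nat -> (j < length parts)%nat ->
    sep dist (nth i parts nil) (nth j parts nil) >
      2 * (rr (length (nth i parts nil)) + rr (length (nth j parts nil))).
Proof.
  intros Hmetric _ Hrule (_ & Hconf & Hsep) i j Hij Hi Hj.
  apply (confined_separated_sep_gt T dist rconv Hmetric N rr dd); auto.
Qed.
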